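(* Let $\mathcal{A}$ be a finite abelian group with $|\mathcal{A}|\ge 3$. Let $H_1(p_1,p_2)$ denote a graph consisting of a triangle $v_2v_3v_4$, a vertex $v_1$ adjacent to $v_2$, $p_1$ pendant vertices adjacent to $v_1$, $p_2\ge0$ pendant vertices adjacent to $v_2$, and $t\ge 1$ further neighbours of $v_1$, each of which is a support vertex all of whose neighbours other than $v_1$ are pendant vertices. Suppose $p_1\ge 1$. Then $H_1(p_1,p_2)$ is $\mathcal{A}$-vertex magic if and only if $p_2=0$ and: (i) if $p_1=1$, every support neighbour of $v_1$ is a strong support vertex and there exist an involution $h$ of $\mathcal{A}$ and $g\in\mathcal{A}\setminus\{0,h\}$ with $h\neq (d(v_1)-2)g$; (ii) if $p_1\ge 2$, every support neighbour of $v_1$ is a strong support vertex and $|\mathcal{A}|$ is even.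
   Context: A pendant vertex has degree $1$; a support vertex is a vertex adjacent to a pendant vertex, and a strong support vertex is one adjacent to at least two pendant vertices. $d(v)$ is the degree of $v$; an involution is an element of order $2$. A map $\ell:V(G)\to\mathcal{A}\setminus\{0\}$ is an $\mathcal{A}$-vertex magic labeling if there is $\mu\in\mathcal{A}$ with $\sum_{u\in N(v)}\ell(u)=\mu$ for every vertex $v$; $G$ is $\mathcal{A}$-vertex magic if such a labeling exists. *)

From HB Require Import structures.
From mathcomp Require Import all_boot all_order all_algebra.
Set Implicit Arguments. Unset Strict Implicit. Unset Printing Implicit Defensive.
Import GRing.Theory.
Local Open Scope ring_scope.

Section GraphNotions.
Variables (T : finType) (adj : rel T).

Definition deg (v : T) : nat := #|[pred u | adj v u]|.
Definition pendant (v : T) : bool := deg v == 1%N.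
Definition support_vertex (v : T) : bool := [exists u, adj v u && pendant u].
Definition strong_support (v : T) : bool :=
  (2 <= #|[pred u | adj v u && pendant u]|)%N.

Definition vertex_magic_labeling (A : zmodType) (l : T -> A) : Prop :=
  (forall v, l v != 0) /\
  exists mu : A, forall v, \sum_(u | adj v u) l u = mu.

Definition is_vertex_magic (A : zmodType) : Prop :=
  exists l : T -> A, vertex_magic_labeling l.
End GraphNotions.

Definition involution (A : zmodType) (h : A) : bool := (h != 0) && (h + h == 0).

(* ---------- The graph H_1(p1,p2) ----------
   core vertices 'I_4 : 0 = v1, 1 = v2, 2 = v3, 3 = v4;
   'I_p1 : pendants of v1;  'I_p2 : pendants of v2;
   'I_t  : the further neighbours u_i of v1;
   {i : 'I_t & 'I_(q i)} : the q i pendants attached to u_i. *)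
Definition H1V (p1 p2 t : nat) (q : 'I_t -> nat) : finType :=
  ('I_4 + 'I_p1 + 'I_p2 + 'I_t + {i : 'I_t & 'I_(q i)})%type.

Definition core_edge (a b : 'I_4) : bool :=
  ((a == 0 :> nat) && (b == 1 :> nat)) || ((a == 1 :> nat) && (b == 2 :> nat))
  || ((a == 1 :> nat) && (b == 3 :> nat)) || ((a == 2 :> nat) && (b == 3 :> nat)).

Definition H1e0 (p1 p2 t : nat) (q : 'I_t -> nat) (x y : H1V p1 p2 q) : bool :=
  match x, y with
  | inl (inl (inl (inl a))), inl (inl (inl (inl b))) => core_edge a b
  | inl (inl (inl (inr _))), inl (inl (inl (inl b))) => b == 0 :> nat
  | inl (inl (inr _)), inl (inl (inl (inl b))) => b == 1 :> nat
  | inl (inr _), inl (inl (inl (inl b))) => b == 0 :> nat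
  | inr (existT i _), inl (inr j) => j == i
  | _, _ => false
  end.

Definition H1adj (p1 p2 t : nat) (q : 'I_t -> nat) : rel (H1V p1 p2 q) :=
  fun x y => H1e0 x y || H1e0 y x.

Definition H1v1 (p1 p2 t : nat) (q : 'I_t -> nat) : H1V p1 p2 q :=
  inl (inl (inl (inl (@Ordinal 4 0 isT)))).

From mathcomp Require Import all_boot all_algebra.
From mathcomp Require Import fingroup pgroup cyclic zify.
Import GRing.Theory.
Local Open Scope ring_scope.

(* A pendant vertex forces the label of its support vertex to be the magic
   constant mu, so v1 and every u_i carry mu.  The neighbourhoods of v3 and v4
   give l(v3) = l(v4) =: h and l(v2) = mu - h, so h != mu; then that of v2
   reads mu + 2h + (labels of the pendants of v2) = mu.  A pendant of v2 would
   force l(v2) = mu, i.e. h = 0; hence p2 = 0 and h is an involution.  The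
   neighbourhood of u_i says that the pendants of u_i have labels summing to 0,
   which needs at least two of them, and that of v1 says that the pendants of
   v1 sum to h - t mu, which for p1 = 1 means h != t mu.  Conversely, in a
   group with at least three elements every element is a sum of k >= 2
   nonzero elements, which is all one needs to label the pendants.  By
   Cauchy's theorem an involution exists exactly when |A| is even. *)

Section FiniteAbelianGroup.
Context {A : finZmodType}.

Lemma involutionE (h : A) : involution h = (#[h]%g == 2%N).
Proof.
rewrite /involution -[h + h == 0](order_dvdn h 2) -[h != 0]order_gt1.
by apply/andP/eqP => [[h_gt1 /dvdn_leq] | ->] //; move=> /(_ isT); lia.
Qed.

Lemma even_card_involution : ~~ odd #|A| <-> exists h : A, involution h.
Proof.
split=> [even_A | [h]].
  have [|h _ oh2] := @Cauchy _ 2 [set: A]%G isT; first by rewrite cardsT dvdn2.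
  by exists h; rewrite involutionE oh2.
by rewrite involutionE -dvdn2 -cardsT => /eqP <-; apply: order_dvdG (in_setT h).
Qed.

Hypothesis A_ge3 : (3 <= #|A|)%N.

Lemma nonzero_avoiding (y : A) : {a : A | (a != 0) && (a != y)}.
Proof.
case: (pickP [pred a : A | (a != 0) && (a != y)]) => [a ha | none]; first by exists a.
exfalso; suff : (#|A| <= #|[set 0%R; y]|)%N by rewrite cards2; case: (_ != _); lia.
rewrite -cardsT; apply/subset_leq_card/subsetP => a _.
by move: (none a); rewrite !inE /=; case: eqP; case: eqP.
Qed.

Lemma sum_nonzero_gt1 k (x : A) : (1 < k)%N ->
  {f : 'I_k -> A | forall j, f j != 0 & \sum_j f j = x}.
Proof.
case: k => [|[|k]] // _; elim: k x => [|k IHk] x.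
  have [a /andP [a_nz a_x]] := nonzero_avoiding x.
  exists (fun j => if j == ord0 then a else x - a).
    by move=> j; case: ifP => _; rewrite // subr_eq0 eq_sym.
  by rewrite big_ord_recl big_ord1 /= addrC subrK.
have [e /andP [e_nz _]] := nonzero_avoiding 0.
have [f f_nz f_sum] := IHk (x - e).
exists (fun j => if unlift ord0 j is Some j' then f j' else e).
  by move=> j; case: unliftP.
rewrite big_ord_recl unlift_none; under eq_bigr do rewrite liftK.
by rewrite f_sum addrC subrK.
Qed.

Lemma sum_nonzero k (x : A) : (0 < k)%N -> (k = 1%N -> x != 0) ->
  {f : 'I_k -> A | forall j, f j != 0 & \sum_j f j = x}.
Proof.
case: k => [|[|k]] // _; last by move=> _; apply: sum_nonzero_gt1.
by move=> /(_ erefl) x_nz; exists (fun=> x); rewrite ?big_ord1.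
Qed.

End FiniteAbelianGroup.

Section PendantNeighbours.
Context {T : finType} (adj : rel T).

Lemma deg_sum v : deg adj v = (\sum_(u | adj v u) 1)%N.
Proof. by rewrite /deg -sum1_card; apply: eq_bigl => u; rewrite inE. Qed.

Lemma card_pendant_nbrs v :
  #|[pred u | adj v u && pendant adj u]| = (\sum_(u | adj v u) pendant adj u)%N.
Proof. by rewrite -sum1_card big_mkcondr /=; apply: eq_bigr => u _; case: pendant. Qed.

Lemma support_vertexE v :
  support_vertex adj v = (0 < \sum_(u | adj v u) pendant adj u)%N.
Proof. by rewrite -card_pendant_nbrs; apply/existsP/card_gt0P => -[u]; exists u. Qed.

Lemma strong_supportE v :
  strong_support adj v = (1 < \sum_(u | adj v u) pendant adj u)%N.
Proof. by rewrite /strong_support card_pendant_nbrs. Qed.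

End PendantNeighbours.

Section BigOrdSmall.
Context {R : Type} {idx : R} {op : Monoid.com_law idx}.

Lemma big_ord_eq0 {n} {F : 'I_n -> R} : n = 0%N -> \big[op/idx]_(j < n) F j = idx.
Proof. by move=> n0; rewrite big_pred0 // => j; have := ltn_ord j; rewrite {2}n0. Qed.

Lemma big_ord_le1 {n} {F : 'I_n -> R} (j0 : 'I_n) :
  (n <= 1)%N -> \big[op/idx]_(j < n) F j = F j0.
Proof.
move=> n_le1; rewrite (big_pred1 j0) // => j /=; apply/esym/eqP/ord_inj.
by have := ltn_ord j; have := ltn_ord j0; lia.
Qed.

End BigOrdSmall.

Section H1Graph.
Variables (p1 p2 t : nat) (q : 'I_t -> nat).
Local Notation V := (H1V p1 p2 q).
Local Notation adj := (@H1adj p1 p2 t q).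

Definition H1core (a : 'I_4) : V := inl (inl (inl (inl a))).
Definition H1pen1 (j : 'I_p1) : V := inl (inl (inl (inr j))).
Definition H1pen2 (j : 'I_p2) : V := inl (inl (inr j)).
Definition H1u (i : 'I_t) : V := inl (inr i).
Definition H1w (i : 'I_t) (j : 'I_(q i)) : V := inr (existT _ i j).

Local Notation c0 := (@Ordinal 4 0 isT).
Local Notation c1 := (@Ordinal 4 1 isT).
Local Notation c2 := (@Ordinal 4 2 isT).
Local Notation c3 := (@Ordinal 4 3 isT).
Local Notation v1 := (H1core c0).
Local Notation v2 := (H1core c1).
Local Notation v3 := (H1core c2).
Local Notation v4 := (H1core c3).

Lemma ord4P (a : 'I_4) : [\/ a = c0, a = c1, a = c2 | a = c3].
Proof.
by case: a => -[|[|[|[|//]]]] a_lt4; [constructor 1|constructor 2|constructor 3|constructor 4];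
  apply: val_inj.
Qed.

Section NeighbourhoodBig.
Variables (R : Type) (idx : R) (op : Monoid.com_law idx).

Lemma big_ord4 (G : 'I_4 -> R) :
  \big[op/idx]_(a < 4) G a = op (G c0) (op (G c1) (op (G c2) (G c3))).
Proof.
rewrite !big_ord_recl big_ord0 Monoid.mulm1.
by congr (op (G _) (op (G _) (op (G _) (G _)))); apply: val_inj.
Qed.

Lemma big_H1V (F : V -> R) :
  \big[op/idx]_(x : V) F x =
  op (op (op (op (\big[op/idx]_(a < 4) F (H1core a))
                 (\big[op/idx]_(j < p1) F (H1pen1 j)))
             (\big[op/idx]_(j < p2) F (H1pen2 j)))
         (\big[op/idx]_(i < t) F (H1u i)))
     (\big[op/idx]_(i < t) \big[op/idx]_(j < q i) F (H1w i j)).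
Proof.
rewrite !big_sumType; congr (op _ _).
rewrite (sig_big_dep xpredT (fun i => xpredT) (fun i j => F (H1w i j))).
by apply: eq_bigr => -[i j].
Qed.

Lemma big_nested_idx : \big[op/idx]_(i < t) \big[op/idx]_(j < q i) idx = idx.
Proof. by rewrite big1 // => i _; rewrite big1_eq. Qed.

Ltac nbr_big :=
  rewrite big_mkcond big_H1V big_ord4 /H1adj /= !big1_eq ?big_nested_idx ?Monoid.mulm1 ?Monoid.mul1m.

Lemma big_adj_w i j F : \big[op/idx]_(x | adj (H1w i j) x) F x = F (H1u i).
Proof. by nbr_big; rewrite -big_mkcond (big_pred1 i) // => k /=; rewrite orbF. Qed.

Lemma big_adj_u i F :
  \big[op/idx]_(x | adj (H1u i) x) F x = op (F v1) (\big[op/idx]_(j < q i) F (H1w i j)).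
Proof.
nbr_big; congr (op _ _).
rewrite (bigD1 i) //= eqxx [X in op _ X]big1 ?Monoid.mulm1 // => k k_i.
by rewrite eq_sym (negbTE k_i) big1_eq.
Qed.

Lemma big_adj_pen1 j F : \big[op/idx]_(x | adj (H1pen1 j) x) F x = F v1.
Proof. by nbr_big. Qed.

Lemma big_adj_pen2 j F : \big[op/idx]_(x | adj (H1pen2 j) x) F x = F v2.
Proof. by nbr_big. Qed.

Lemma big_adj_v3 F : \big[op/idx]_(x | adj v3 x) F x = op (F v2) (F v4).
Proof. by nbr_big. Qed.

Lemma big_adj_v4 F : \big[op/idx]_(x | adj v4 x) F x = op (F v2) (F v3).
Proof. by nbr_big. Qed.

Lemma big_adj_v2 F :
  \big[op/idx]_(x | adj v2 x) F x =
  op (F v1) (op (F v3) (op (F v4) (\big[op/idx]_(j < p2) F (H1pen2 j)))).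
Proof. by nbr_big; rewrite !Monoid.mulmA. Qed.

Lemma big_adj_v1 F :
  \big[op/idx]_(x | adj v1 x) F x =
  op (F v2) (op (\big[op/idx]_(j < p1) F (H1pen1 j)) (\big[op/idx]_(i < t) F (H1u i))).
Proof. by nbr_big; rewrite !Monoid.mulmA. Qed.

End NeighbourhoodBig.

Lemma deg_v1 : deg adj v1 = (1 + (p1 + t))%N.
Proof. by rewrite deg_sum big_adj_v1 !sum1_card !card_ord. Qed.

Lemma pendant_w i j : pendant adj (H1w i j).
Proof. by rewrite /pendant deg_sum big_adj_w. Qed.

Lemma pendant_v1 : (0 < p1)%N -> ~~ pendant adj v1.
Proof. by rewrite /pendant deg_v1; lia. Qed.

Lemma not_support_pen1 j : (0 < p1)%N -> ~~ support_vertex adj (H1pen1 j).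
Proof. by move=> p1_gt0; rewrite support_vertexE big_adj_pen1 lt0b pendant_v1. Qed.

Lemma not_support_v2 : (0 < p1)%N -> p2 = 0%N -> ~~ support_vertex adj v2.
Proof.
move=> p1_gt0 p2_0; rewrite support_vertexE big_adj_v2 big_pred0 => [|j]; last first.
  by have := ltn_ord j; rewrite {2}p2_0.
by rewrite (negbTE (pendant_v1 p1_gt0)) /pendant !deg_sum big_adj_v3 big_adj_v4.
Qed.

Lemma sum_pendant_u i :
  (0 < p1)%N -> (\sum_(x | adj (H1u i) x) pendant adj x)%N = q i.
Proof.
move=> p1_gt0; rewrite big_adj_u (negbTE (pendant_v1 p1_gt0)) /=.
by under eq_bigr do rewrite pendant_w; rewrite sum1_card card_ord.
Qed.

Lemma strong_support_nbrs_v1 : (0 < p1)%N -> p2 = 0%N -> (forall i, 0 < q i)%N ->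
  (forall u, adj v1 u -> support_vertex adj u -> strong_support adj u) <->
  (forall i, 1 < q i)%N.
Proof.
move=> p1_gt0 p2_0 q_gt0; split=> [strong i | q_gt1 [[[[a|j]|j]|i]|[i j]]] //.
- have u_support : support_vertex adj (H1u i) by rewrite support_vertexE sum_pendant_u.
  by rewrite -(sum_pendant_u i p1_gt0) -strong_supportE; apply: strong.
- by case: (ord4P a) => -> //; rewrite (negbTE (not_support_v2 p1_gt0 p2_0)).
- by rewrite (negbTE (not_support_pen1 j p1_gt0)).
- by move=> _ _; rewrite strong_supportE sum_pendant_u.
Qed.

Section MagicLabeling.
Context {A : zmodType} {l : V -> A} {mu : A}.
Hypotheses (l_nz : forall v, l v != 0) (l_magic : forall v, \sum_(u | adj v u) l u = mu).
Hypotheses (p1_gt0 : (0 < p1)%N) (q_gt0 : forall i, (0 < q i)%N).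

Lemma magic_v1 : l v1 = mu.
Proof. by rewrite -(l_magic (H1pen1 (Ordinal p1_gt0))) big_adj_pen1. Qed.

Lemma magic_u i : l (H1u i) = mu.
Proof. by rewrite -(l_magic (H1w i (Ordinal (q_gt0 i)))) big_adj_w. Qed.

Lemma magic_v2 : l v2 = mu - l v3.
Proof. by rewrite -(l_magic v4) big_adj_v4 addrK. Qed.

Lemma magic_v4 : l v4 = l v3.
Proof. by apply: (@addrI _ (l v2)); rewrite -big_adj_v3 -big_adj_v4 !l_magic. Qed.

Lemma magic_p2 : p2 = 0%N.
Proof.
apply/eqP; rewrite -leqn0 leqNgt; apply/negP => p2_gt0.
have := l_magic (H1pen2 (Ordinal p2_gt0)); rewrite big_adj_pen2 magic_v2 => /eqP.
by rewrite -subr_eq0 addrAC subrr sub0r oppr_eq0 (negbTE (l_nz v3)).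
Qed.

Lemma magic_involution : involution (l v3).
Proof.
have := l_magic v2; rewrite big_adj_v2 (big_ord_eq0 magic_p2) /= addr0 magic_v1 magic_v4.
by move=> /(canRL (addKr mu)); rewrite addNr /involution l_nz => ->; rewrite eqxx.
Qed.

Lemma magic_q_gt1 i : (1 < q i)%N.
Proof.
rewrite ltnNge; apply/negP => q_le1; have := l_magic (H1u i).
rewrite big_adj_u magic_v1 (big_ord_le1 (Ordinal (q_gt0 i))) //.
by move=> /(canRL (addKr mu)); rewrite addNr; apply/eqP.
Qed.

Lemma magic_sum_pen1 : \sum_(j < p1) l (H1pen1 j) = l v3 - mu *+ t.
Proof.
have sum_u : \sum_(i < t) l (H1u i) = mu *+ t.
  by under eq_bigr do rewrite magic_u; rewrite sumr_const card_ord.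
have := l_magic v1; rewrite big_adj_v1 /= magic_v2 sum_u.
by move=> /(canRL (addKr _)) /(canRL (addrK _)); rewrite opprB subrK.
Qed.

Lemma magic_nondegenerate : [/\ mu != 0, mu != l v3 & (p1 = 1%N -> l v3 != mu *+ t)].
Proof.
split; first by rewrite -magic_v1.
  by rewrite -subr_eq0 -magic_v2.
by move=> p1_1; rewrite -subr_eq0 -magic_sum_pen1 (big_ord_le1 (Ordinal p1_gt0)) ?p1_1.
Qed.

End MagicLabeling.

Definition H1_labeling {A : zmodType} (c mu : A) (f : 'I_p1 -> A)
    (g : forall i, 'I_(q i) -> A) (v : V) : A :=
  match v with
  | inl (inl (inl (inl a))) => match val a with 0 => mu | 1 => mu - c | _ => c end
  | inl (inl (inl (inr j))) => f j
  | inl (inl (inr _)) | inl (inr _) => mu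
  | inr (existT i j) => g i j
  end.

Section Construction.
Context {A : zmodType} {c mu : A} {f : 'I_p1 -> A} {g : forall i, 'I_(q i) -> A}.
Local Notation l := (H1_labeling c mu f g).

Lemma H1_labeling_nz : c != 0 -> mu != 0 -> mu != c ->
  (forall j, f j != 0) -> (forall i j, g i j != 0) -> forall v, l v != 0.
Proof.
move=> c_nz mu_nz mu_c f_nz g_nz [[[[a|j]|j]|i]|[i j]] //=.
by case: (ord4P a) => -> //=; rewrite subr_eq0.
Qed.

Lemma H1_labeling_magic : p2 = 0%N -> c + c = 0 -> \sum_j f j = c - mu *+ t ->
  (forall i, \sum_j g i j = 0) -> forall v, \sum_(u | adj v u) l u = mu.
Proof.
move=> p2_0 cc f_sum g_sum [[[[a|j]|j]|i]|[i j]].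
- case: (ord4P a) => ->.
  + by rewrite big_adj_v1 /= f_sum sumr_const card_ord !subrK.
  + by rewrite big_adj_v2 (big_ord_eq0 p2_0) /= addr0 cc addr0.
  + by rewrite big_adj_v3 /= subrK.
  + by rewrite big_adj_v4 /= subrK.
- by rewrite big_adj_pen1.
- by have := ltn_ord j; rewrite {2}p2_0.
- by rewrite big_adj_u /= g_sum addr0.
- by rewrite big_adj_w.
Qed.

End Construction.

Definition H1_magic_nondegenerate (A : zmodType) : Prop :=
  [/\ p2 = 0%N, forall i, (1 < q i)%N &
      exists c mu : A, [/\ involution c, mu != 0, mu != c & (p1 = 1%N -> c != mu *+ t)]].

Lemma H1_vertex_magicP (A : finZmodType) : (3 <= #|A|)%N ->
  (0 < p1)%N -> (forall i, 0 < q i)%N ->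
  is_vertex_magic adj A <-> H1_magic_nondegenerate A.
Proof.
move=> A_ge3 p1_gt0 q_gt0; split=> [[l [l_nz [mu l_magic]]] | ].
  have [mu_nz mu_v3 v3_t] := magic_nondegenerate l_nz l_magic p1_gt0 q_gt0.
  split; [exact: magic_p2 l_nz l_magic | exact: magic_q_gt1 l_nz l_magic p1_gt0 q_gt0 | ].
  by exists (l v3), mu; split=> //; exact: magic_involution l_nz l_magic p1_gt0.
case=> p2_0 q_gt1 [c [mu [/andP [c_nz /eqP cc] mu_nz mu_c c_t]]].
have f_ok : p1 = 1%N -> c - mu *+ t != 0 by move=> /c_t; rewrite subr_eq0.
have [f f_nz f_sum] := sum_nonzero A_ge3 p1 (c - mu *+ t) p1_gt0 f_ok.
pose g i := s2val (sum_nonzero_gt1 A_ge3 (q i) 0 (q_gt1 i)).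
have g_nz i : forall j, g i j != 0 := s2valP (sum_nonzero_gt1 A_ge3 (q i) 0 (q_gt1 i)).
have g_sum i : \sum_j g i j = 0 := s2valP' (sum_nonzero_gt1 A_ge3 (q i) 0 (q_gt1 i)).
exists (H1_labeling c mu f g); split; first exact: H1_labeling_nz.
by exists mu; apply: H1_labeling_magic.
Qed.

End H1Graph.

Theorem proposition3p5 (A : finZmodType) (p1 p2 t : nat) (q : 'I_t -> nat) :
  (3 <= #|A|)%N -> (1 <= p1)%N -> (1 <= t)%N -> (forall i, 1 <= q i)%N ->
  is_vertex_magic (@H1adj p1 p2 t q) A <->
  (p2 = 0%N /\
   (p1 = 1%N ->
      (forall u, H1adj (H1v1 p1 p2 q) u -> support_vertex (@H1adj p1 p2 t q) u ->
                 strong_support (@H1adj p1 p2 t q) u) /\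
      exists h g : A, involution h /\ g != 0 /\ g != h /\
                      h != g *+ (deg (@H1adj p1 p2 t q) (H1v1 p1 p2 q) - 2)) /\
   ((2 <= p1)%N ->
      (forall u, H1adj (H1v1 p1 p2 q) u -> support_vertex (@H1adj p1 p2 t q) u ->
                 strong_support (@H1adj p1 p2 t q) u) /\
      ~~ odd #|A|)).
Proof.
move=> A_ge3 p1_gt0 _ q_gt0; rewrite H1_vertex_magicP // deg_v1.
have deg_t : p1 = 1%N -> (1 + (p1 + t) - 2 = t)%N by lia.
split=> [[p2_0 q_gt1 [c [mu [c_inv mu_nz mu_c c_t]]]] | [p2_0 [p1_1P p1_ge2P]]].
  have strong := (strong_support_nbrs_v1 p1 p2 t q p1_gt0 p2_0 q_gt0).2 q_gt1.
  split=> //; split=> [p1_1 | _]; split=> //.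
    by exists c, mu; rewrite deg_t //; do !split=> //; apply: c_t.
  by apply/even_card_involution; exists c.
have strong_q := (strong_support_nbrs_v1 p1 p2 t q p1_gt0 p2_0 q_gt0).1.
have [p1_1 | p1_ge2] : p1 = 1%N \/ (2 <= p1)%N by lia.
  case: (p1_1P p1_1) => /strong_q q_gt1 [h [g [h_inv [g_nz [g_h h_g]]]]].
  by split=> //; exists h, g; split=> //; rewrite -deg_t.
case: (p1_ge2P p1_ge2) => /strong_q q_gt1 /even_card_involution [c c_inv].
have [mu /andP [mu_nz mu_c]] := nonzero_avoiding A_ge3 c.
by split=> //; exists c, mu; split=> // p1_1; move: p1_ge2; rewrite p1_1.
Qed.
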